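(* In the deterministic flow interdiction problem (with the setting below), there exists an optimal interdiction strategy $w$ which is pure and supported on a single-path flow, i.e., $w(\mathbf{f}^* )=1$ for some single-path flow $\mathbf{f}^*\in\mathcal{F}_{\le\gamma}$.
   Context: Let $G=(V,E)$ be a simple directed acyclic graph with capacities $C\in\mathbb{R}_{\ge0}^E$, $s,t\in V$ with a directed $s$-$t$ path, and budget $\gamma$ with $0<\gamma\le\min_{e}C(e)$. An $s$-$t$ flow is $\mathbf{f}\in\mathbb{R}^E$ with $0\le\mathbf{f}(e)\le C(e)$ and flow conservation at all $v\ne s,t$; $val(\mathbf{f})=\sum_{(s,u)\in E}\mathbf{f}(s,u)$; $\mathcal{F}_{\le\gamma}$ is the set of $s$-$t$ flows with value at most $\gamma$. An interdiction strategy is a finitely supported probability distribution $w$ on $\mathcal{F}_{\le\gamma}$. A single-path flow is an $s$-$t$ flow whose positive entries lie on the edges of one $s$-$t$ path. User paths $P=\{p_1,\dots,p_k\}$ are directed paths (edge sets) with initial flow values $\lambda_i\ge0$, $\sum_{i:e\in p_i}\lambda_i\le C(e)$ for all $e$. $T(\mathbf{f},P)$ is the optimal value of: maximize $\sum_i\tilde\lambda_i$ s.t. $\sum_{i:e\in p_i}\tilde\lambda_i\le C(e)-\mathbf{f}(e)$ for all $e$, $0\le\tilde\lambda_i\le\lambda_i$; $\Lambda(\mathbf{f},P)=\sum_i\lambda_i-T(\mathbf{f},P)$, $\Lambda(w,P)=\sum_{\mathbf{f}}w(\mathbf{f})\Lambda(\mathbf{f},P)$. The deterministic flow interdiction problem: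 given $P$ and its initial values, find an interdiction strategy $w$ maximizing $\Lambda(w,P)$. *)

From HB Require Import structures.
From mathcomp Require Import all_boot all_order all_algebra.
From mathcomp Require Import boolp classical_sets reals.
From Stdlib Require List.
Set Implicit Arguments. Unset Strict Implicit. Unset Printing Implicit Defensive.
Import Order.TTheory GRing.Theory Num.Theory.
Local Open Scope ring_scope.

Section FlowInterdiction.
Variables (R : realType) (V : finType) (E : rel V).

Definition simple_dag : Prop :=
  (forall v, ~~ E v v) /\
  (forall (v : V) (p : seq V), p != [::] -> path E v p -> last v p != v).

Definition path_edges (pq : V * seq V) : seq (V * V) := zip (pq.1 :: pq.2) pq.2.

(* A vector on edges is represented as a function V -> V -> R; only the
   values on edges are meaningful (flows are required to vanish off edges). *)
Variables (C : V -> V -> R) (s t : V).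

Definition is_st_flow (f : V -> V -> R) : Prop :=
  (forall u v, E u v -> 0 <= f u v <= C u v) /\
  (forall u v, ~~ E u v -> f u v = 0) /\
  (forall v, v != s -> v != t ->
     \sum_(u | E u v) f u v = \sum_(u | E v u) f v u).

Definition flow_val (f : V -> V -> R) : R := \sum_(u | E s u) f s u.

Definition in_Fle (gamma : R) (f : V -> V -> R) : Prop :=
  is_st_flow f /\ flow_val f <= gamma.

Definition single_path_flow (f : V -> V -> R) : Prop :=
  is_st_flow f /\
  exists q : seq V, [/\ path E s q, last s q = t &
    forall u v, 0 < f u v -> (u, v) \in path_edges (s, q)].

Variables (k : nat) (P : 'I_k -> V * seq V) (lam : 'I_k -> R).

Definition user_paths_ok : Prop :=
  (forall i, path E (P i).1 (P i).2) /\
  (forall i, 0 <= lam i) /\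
  (forall u v, E u v -> \sum_(i | (u, v) \in path_edges (P i)) lam i <= C u v).

(* T(f, P): optimal value of the LP (a maximum: the feasible set is a
   nonempty compact polytope), expressed as the supremum of feasible values *)
Definition T_val (f : V -> V -> R) : R :=
  sup [set x : R | exists lt : 'I_k -> R,
        [/\ (forall i, 0 <= lt i <= lam i),
            (forall u v, E u v ->
               \sum_(i | (u, v) \in path_edges (P i)) lt i <= C u v - f u v) &
            x = \sum_i lt i]].

Definition Lambda_flow (f : V -> V -> R) : R := \sum_i lam i - T_val f.

(* An interdiction strategy: finitely supported distribution on F_{<= gamma},
   given as a finite list of (probability, flow) atoms. *)
Definition strategy (gamma : R) (w : seq (R * (V -> V -> R))) : Prop :=
  (forall a, List.In a w -> 0 <= a.1) /\
  \sum_(a <- w) a.1 = 1 /\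
  (forall a, List.In a w -> in_Fle gamma a.2).

Definition Lambda_strategy (w : seq (R * (V -> V -> R))) : R :=
  \sum_(a <- w) a.1 * Lambda_flow a.2.

Definition optimal_strategy (gamma : R) (w0 : seq (R * (V -> V -> R))) : Prop :=
  strategy gamma w0 /\
  forall w, strategy gamma w -> Lambda_strategy w <= Lambda_strategy w0.

End FlowInterdiction.

(* The loss Lambda f = sum lam - T f is convex in the interdicting flow f: T is
   the value of a packing LP whose capacities C - f depend affinely on f.
   Moreover Lambda 0 = 0.  In a DAG, a flow f of value at most gamma
   decomposes into flows on s-t paths, f = sum_j m_j 1_(Q_j) with
   sum_j m_j = val f <= gamma, i.e. f is the convex combination
   sum_j (m_j / gamma) (gamma 1_(Q_j)) + (1 - val f / gamma) 0.  Convexity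
   then bounds Lambda f by the largest Lambda (gamma 1_Q) over s-t paths Q,
   and the loss of any mixed strategy, an average of such Lambda f, by the
   loss of the pure strategy on the best single-path flow gamma 1_Q. *)

From HB Require Import structures.
From mathcomp Require Import all_boot all_order all_algebra.
From mathcomp Require Import boolp classical_sets reals.
From mathcomp Require Import zify lra.
Set Implicit Arguments. Unset Strict Implicit. Unset Printing Implicit Defensive.
Import Order.TTheory GRing.Theory Num.Theory.
Local Open Scope ring_scope.

Lemma path_last_pred (T : eqType) (r : rel T) x p :
  p != [::] -> path r x p -> exists y, r y (last x p).
Proof.
case/lastP: p => [|p z] // _; rewrite rcons_path last_rcons => /andP[_ ?].
by exists (last x p).
Qed.

Lemma psumr_neq0E (R : numDomainType) (I : finType) (P : pred I) (F : I -> R) :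
  (forall i, P i -> 0 <= F i) ->
  (\sum_(i | P i) F i != 0) = [exists i, P i && (0 < F i)].
Proof.
move=> F_ge0; rewrite psumr_neq0 //.
by apply/hasP/existsP => [[i _ ?]|[i ?]]; exists i; rewrite ?mem_index_enum.
Qed.

Section BoundedPaths.
Variables (T : finType) (r : rel T) (N : nat).
Hypothesis r_bounded : forall x p, path r x p -> (size p < N)%N.

Lemma exists_maximal_path x : exists p, path r x p /\ forall y, ~~ r (last x p) y.
Proof.
suff ext n p : path r x p -> (N - size p <= n)%N ->
    exists p', path r x p' /\ forall y, ~~ r (last x p') y.
  by apply: (ext N [::]); rewrite ?leq_subr.
elim: n p => [|n IHn] p rp Np; first by have := r_bounded rp; lia.
case: (pickP (r (last x p))) => [y rly | no]; last by exists p; split=> // y; rewrite no.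
have rpy : path r x (rcons p y) by rewrite rcons_path rp rly.
by apply: (IHn _ rpy); have := r_bounded rpy; rewrite size_rcons; lia.
Qed.

Lemma converse_bounded x p : path (fun a b => r b a) x p -> (size p < N)%N.
Proof.
by rewrite -rev_path => /r_bounded; rewrite size_rev size_belast.
Qed.

End BoundedPaths.

Lemma bounded_seq_argmax (T : finType) (N : nat) (d : Order.disp_t) (U : orderType d)
    (A : pred (seq T)) (F : seq T -> U) :
  (forall q, A q -> (size q < N)%N) -> forall q0, A q0 ->
  exists2 q, A q & forall q', A q' -> (F q' <= F q)%O.
Proof.
move=> A_bounded q0 Aq0.
pose code q (q_lt : (size q < N)%N) : {n : 'I_N & n.-tuple T} :=
  @Tagged _ (Ordinal q_lt) (fun n : 'I_N => n.-tuple T) (in_tuple q).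
pose decode (x : {n : 'I_N & n.-tuple T}) : seq T := tagged x.
have Acode0 : (A \o decode) (code q0 (A_bounded q0 Aq0)) by [].
case: (arg_maxP (F \o decode) Acode0) => x Ax x_max.
by exists (decode x) => // q Aq; apply: (x_max (code q (A_bounded q Aq))).
Qed.

Section Dag.
Variables (V : finType) (E : rel V).
Hypothesis dag : simple_dag E.

Lemma dag_path_notin x p : path E x p -> x \notin p.
Proof.
move=> Exp; apply/negP => /splitPr xp; case: xp Exp => p1 p2.
rewrite cat_path /= => /and3P[Exp1 Ex _].
have := (proj2 dag) x (rcons p1 x); rewrite rcons_path Exp1 Ex last_rcons eqxx.
by case: p1 {Exp1 Ex} => [|? ?] /(_ isT isT).
Qed.

Lemma dag_path_uniq x p : path E x p -> uniq (x :: p).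
Proof.
elim: p x => [|y p IHp] x // Exp.
by rewrite cons_uniq dag_path_notin // IHp //; case/andP: Exp.
Qed.

Lemma dag_path_size x p : path E x p -> (size p < #|V|)%N.
Proof. by move=> /dag_path_uniq /card_uniqP /= <-; apply: max_card. Qed.

End Dag.

Section PathEdges.
Variables (V : finType).

Lemma unzip1_path_edges (x : V) q : unzip1 (path_edges (x, q)) = belast x q.
Proof. by elim: q x => [|y q IHq] x //=; rewrite -IHq. Qed.

Lemma unzip2_path_edges (x : V) q : unzip2 (path_edges (x, q)) = q.
Proof. by rewrite unzip2_zip /=. Qed.

Lemma path_edges_uniq (x : V) q : uniq (x :: q) -> uniq (path_edges (x, q)).
Proof. exact: zip_uniql. Qed.

Lemma path_edgesP (r : rel V) x q u v :
  path r x q -> (u, v) \in path_edges (x, q) -> r u v.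
Proof.
elim: q x => [|y q IHq] x //= /andP[rxy rq].
by rewrite inE => /orP[/eqP[-> ->] //|/IHq]; apply.
Qed.

Lemma sum_count_mem_snd (z : seq (V * V)) v :
  (\sum_u count_mem (u, v) z = count_mem v (unzip2 z))%N.
Proof.
elim: z => [|[a b] z IHz] /=; first by rewrite big1.
rewrite big_split /= IHz (bigD1 a) //= big1 => [|u /negbTE ua].
  by rewrite xpair_eqE eqxx /= addn0.
by rewrite xpair_eqE eq_sym ua.
Qed.

Lemma sum_count_mem_fst (z : seq (V * V)) u :
  (\sum_v count_mem (u, v) z = count_mem u (unzip1 z))%N.
Proof.
elim: z => [|[a b] z IHz] /=; first by rewrite big1.
rewrite big_split /= IHz (bigD1 b) //= big1 => [|v /negbTE vb].
  by rewrite xpair_eqE eqxx andbT addn0.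
by rewrite xpair_eqE (eq_sym b) vb andbF.
Qed.

End PathEdges.

Section PathFlow.
Variables (R : numDomainType) (V : finType) (E : rel V).
Implicit Types (a : R) (x u v : V) (q : seq V).

(* Edges are counted with multiplicity, so that conservation holds along any
   walk; on the duplicate-free paths of a DAG this is [a] times the indicator
   of the edges of the path. *)
Definition path_flow a (pq : V * seq V) : V -> V -> R :=
  fun u v => a *+ count_mem (u, v) (path_edges pq).

Lemma path_flow_notin a x q u v :
  (u, v) \notin path_edges (x, q) -> path_flow a (x, q) u v = 0.
Proof. by move=> /count_memPn uv_notin; rewrite /path_flow uv_notin. Qed.

Lemma path_flow_off a x q u v : path E x q -> ~~ E u v -> path_flow a (x, q) u v = 0.
Proof. by move=> Exq nEuv; apply/path_flow_notin; apply: contra nEuv; apply: path_edgesP. Qed.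

Lemma path_flow_ge0 a x q u v : 0 <= a -> 0 <= path_flow a (x, q) u v.
Proof. exact: mulrn_wge0. Qed.

Lemma path_flow_le a x q u v : 0 <= a -> uniq (x :: q) -> path_flow a (x, q) u v <= a.
Proof.
move=> a_ge0 /path_edges_uniq uniq_edges.
by rewrite /path_flow count_uniq_mem // -[leRHS]mulr1n ler_wpMn2l ?leq_b1.
Qed.

Lemma path_flow_edge a x q u v :
  uniq (x :: q) -> (u, v) \in path_edges (x, q) -> path_flow a (x, q) u v = a.
Proof. by move=> /path_edges_uniq uniq_edges uv; rewrite /path_flow count_uniq_mem ?uv. Qed.

Lemma path_flow_gt0 a x q u v : 0 < path_flow a (x, q) u v -> (u, v) \in path_edges (x, q).
Proof. by apply: contraTT => /path_flow_notin ->; rewrite ltxx. Qed.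

Lemma sum_path_flow_in a x q v : path E x q ->
  \sum_(u | E u v) path_flow a (x, q) u v = a *+ count_mem v q.
Proof.
move=> Exq; rewrite big_mkcond (eq_bigr (fun u => path_flow a (x, q) u v)) => [|u _].
  by rewrite sumrMnr sum_count_mem_snd unzip2_path_edges.
by case: ifPn => // /(path_flow_off a Exq).
Qed.

Lemma sum_path_flow_out a x q v : path E x q ->
  \sum_(u | E v u) path_flow a (x, q) v u = a *+ count_mem v (belast x q).
Proof.
move=> Exq; rewrite big_mkcond (eq_bigr (fun u => path_flow a (x, q) v u)) => [|u _].
  by rewrite sumrMnr sum_count_mem_fst unzip1_path_edges.
by case: ifPn => // /(path_flow_off a Exq).
Qed.

Lemma path_flow_conservation a x q v : path E x q -> v != x -> v != last x q ->
  \sum_(u | E u v) path_flow a (x, q) u v = \sum_(u | E v u) path_flow a (x, q) v u.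
Proof.
move=> Exq vx vlast; rewrite sum_path_flow_in // sum_path_flow_out //; congr (_ *+ _).
have := congr1 (count_mem v) (lastI x q).
rewrite -cats1 count_cat /= (eq_sym x) (eq_sym (last x q)) (negbTE vx) (negbTE vlast).
by rewrite add0n !addn0.
Qed.

Lemma path_flow_value a x q : path E x q -> uniq (x :: q) ->
  \sum_(u | E x u) path_flow a (x, q) x u = a *+ (q != [::]).
Proof.
move=> Exq; rewrite sum_path_flow_out //; case: q Exq => [|y q] //= _ /andP[+ _].
rewrite eqxx add1n => x_notin; congr (_ *+ _.+1).
by apply/count_memPn; apply: contra x_notin => /mem_belast.
Qed.

Definition paths_flow x (ps : seq (R * seq V)) : V -> V -> R :=
  fun u v => \sum_(p <- ps) path_flow p.1 (x, p.2) u v.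

End PathFlow.

Section FlowDecomposition.
Variables (R : realType) (V : finType) (E : rel V) (s t : V).
Hypothesis dag : simple_dag E.
Variable q0 : seq V.
Hypotheses (Eq0 : path E s q0) (last_q0 : last s q0 = t).
Implicit Types (f : V -> V -> R).

Definition uncapacitated_flow f :=
  [/\ forall u v, E u v -> 0 <= f u v, forall u v, ~~ E u v -> f u v = 0 &
      forall v, v != s -> v != t -> \sum_(u | E u v) f u v = \sum_(u | E v u) f v u].

Definition positive_edge f : rel V := fun u v => E u v && (0 < f u v).

Definition flow_support f : {set V * V} := [set e | 0 < f e.1 e.2].

Definition weighted_st_path (p : R * seq V) :=
  [&& 0 < p.1, path E s p.2, last s p.2 == t & p.2 != [::]].

Lemma uncapacitated_flow_ge0 f u v : uncapacitated_flow f -> 0 <= f u v.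
Proof. by case=> f_ge0 f_off _; case: (boolP (E u v)) => [/f_ge0 | /f_off ->]. Qed.

Lemma positive_edge_sub f : subrel (positive_edge f) E.
Proof. by move=> u v /andP[]. Qed.

Lemma positive_in_out f v : uncapacitated_flow f -> v != s -> v != t ->
  [exists u, positive_edge f u v] = [exists w, positive_edge f v w].
Proof.
case=> f_ge0 _ f_cons vs vt.
by rewrite -!psumr_neq0E ?f_cons // => u; apply: f_ge0.
Qed.

Lemma positive_st_path f u v : uncapacitated_flow f -> positive_edge f u v ->
  exists Q, [/\ path (positive_edge f) s Q, last s Q = t & Q != [::]].
Proof.
move=> flow_f pos_uv; set pos := positive_edge f in pos_uv *.
(* [a] below is a source and [last a p] a sink of the positive part of [f]:
   conservation puts both in {s, t}, acyclicity makes them distinct, and [q0]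
   rules out a positive path from t to s. *)
have pos_bounded x p : path pos x p -> (size p < #|V|)%N.
  by move/(sub_path (@positive_edge_sub f)); apply: dag_path_size.
have endpoint w : [exists c, pos c w] != [exists c, pos w c] -> w = s \/ w = t.
  case: (eqVneq w s) => [|ws in_out]; [by left | right].
  by apply/eqP; apply: contraNT in_out => wt; rewrite positive_in_out.
have [a a_out a_in] : exists2 a, [exists c, pos a c] & ~~ [exists c, pos c a].
  have [p [conv_p no_in]] := exists_maximal_path (converse_bounded pos_bounded) u.
  exists (last u p); last by apply/existsPn.
  have : path (fun x y => pos y x) v (u :: p) by rewrite /= pos_uv.
  by case/path_last_pred => // c pos_c; apply/existsP; exists c.
have [p [pos_p no_out]] := exists_maximal_path pos_bounded a.
have p_nil : p != [::].
  by apply: contraTneq a_out => p_nil; apply/existsPn; rewrite p_nil in no_out.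
have [b pos_b] := path_last_pred p_nil pos_p.
have Ep := sub_path (@positive_edge_sub f) pos_p.
have no_loop := (proj2 dag) a p p_nil Ep.
have a_st : a = s \/ a = t by apply: endpoint; rewrite a_out (negbTE a_in).
have b_st : last a p = s \/ last a p = t.
  apply: endpoint; have -> : [exists c, pos (last a p) c] = false by apply/existsPn.
  by have -> : [exists c, pos c (last a p)] by apply/existsP; exists b.
case: a_st => ?; subst a; case: b_st => last_p; rewrite last_p ?eqxx // in no_loop.
- by exists p.
- have st_cycle := (proj2 dag) s (q0 ++ p).
  rewrite cat_path Eq0 last_cat last_q0 Ep last_p eqxx in st_cycle.
  by have /st_cycle/(_ isT) : q0 ++ p != [::] by case: (q0).
Qed.

Lemma peel_st_path f e : uncapacitated_flow f -> e \in flow_support f ->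
  exists m Q f', [/\ weighted_st_path (m, Q), uncapacitated_flow f',
    (#|flow_support f'| < #|flow_support f|)%N &
    f = fun u v => path_flow m (s, Q) u v + f' u v].
Proof.
move=> flow_f; rewrite inE => f_e; case: (flow_f) => _ f_off f_cons.
have Ee : E e.1 e.2 by apply: contraLR f_e => /f_off ->; rewrite ltxx.
have pos_e : positive_edge f e.1 e.2 by rewrite /positive_edge Ee f_e.
have [Q [posQ lastQ Q_nil]] := positive_st_path flow_f pos_e.
have EQ := sub_path (@positive_edge_sub f) posQ.
have uniqQ := dag_path_uniq dag EQ.
have first_edge : (s, head s Q) \in path_edges (s, Q).
  by case: (Q) Q_nil => //= *; rewrite inE eqxx.
case: (arg_minP (fun e => f e.1 e.2) first_edge) => -[a b] abQ /= min_ab.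
have m_gt0 : 0 < f a b by case/andP: (path_edgesP posQ abQ).
have path_le u v : path_flow (f a b) (s, Q) u v <= f u v.
  have [uvQ|uvQ] := boolP ((u, v) \in path_edges (s, Q)).
    by rewrite path_flow_edge //; apply: (min_ab (u, v)).
  by rewrite path_flow_notin // uncapacitated_flow_ge0.
exists (f a b), Q, (fun u v => f u v - path_flow (f a b) (s, Q) u v); split.
- by rewrite /weighted_st_path m_gt0 EQ lastQ eqxx.
- split=> [u v _|u v nEuv|w ws wt]; first by rewrite subr_ge0.
    by rewrite f_off // (path_flow_off _ EQ nEuv) subr0.
  by rewrite !sumrB f_cons // path_flow_conservation // lastQ.
- apply: proper_card; apply/properP; split.
    apply/fintype.subsetP => -[u v]; rewrite !inE /= => /lt_le_trans; apply.
    by rewrite gerBl path_flow_ge0 // ltW.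
  by exists (a, b); rewrite !inE //= path_flow_edge // subrr ltxx.
- by apply/funext => u; apply/funext => v; rewrite addrC subrK.
Qed.

Lemma flow_decomposition f : uncapacitated_flow f ->
  exists2 ps, all weighted_st_path ps & f = paths_flow s ps.
Proof.
have [n] := ubnP #|flow_support f|; elim: n f => // n IHn f supp_lt flow_f.
have [supp0|[e e_supp]] := set_0Vmem (flow_support f).
  exists [::] => //; apply/funext => u; apply/funext => v; rewrite /paths_flow big_nil.
  have : (u, v) \notin flow_support f by rewrite supp0 inE.
  by rewrite inE /= -leNgt => f_le0; apply/eqP; rewrite eq_le f_le0 uncapacitated_flow_ge0.
have [m [Q [f' [mQ flow_f' supp_lt' ->]]]] := peel_st_path flow_f e_supp.
have [ps wps ->] := IHn f' (leq_trans supp_lt' supp_lt) flow_f'.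
exists ((m, Q) :: ps); first by rewrite /= mQ.
by apply/funext => u; apply/funext => v; rewrite /paths_flow big_cons.
Qed.

Lemma paths_flow_val ps : all weighted_st_path ps ->
  flow_val E s (paths_flow s ps) = \sum_(p <- ps) p.1.
Proof.
move=> /allP wps; rewrite /flow_val /paths_flow exchange_big /=.
apply: eq_big_seq => p /wps /and4P[_ Ep _ p_nil].
have uniq_p := dag_path_uniq dag Ep.
by rewrite path_flow_value //; move: p_nil; case: (p.2).
Qed.

End FlowDecomposition.

Section Throughput.
Local Open Scope classical_set_scope.
Variables (R : realType) (V : finType) (E : rel V) (C : V -> V -> R).
Variables (k : nat) (P : 'I_k -> V * seq V) (lam : 'I_k -> R).
Hypothesis paths_ok : user_paths_ok E C P lam.
Implicit Types (f : V -> V -> R) (l : 'I_k -> R).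

Definition within_capacity f := forall u v, E u v -> f u v <= C u v.

Definition residual_feasible f l :=
  (forall i, 0 <= l i <= lam i) /\
  (forall u v, E u v -> \sum_(i | (u, v) \in path_edges (P i)) l i <= C u v - f u v).

Lemma T_valE f :
  T_val E C P lam f = sup [set \sum_i l i | l in residual_feasible f].
Proof.
congr sup; apply/seteqP; split=> x; first by case=> l [l_bnd l_load ->]; exists l.
by case=> l [l_bnd l_load] <-; exists l.
Qed.

Lemma residual_feasible0 f : within_capacity f -> residual_feasible f (fun=> 0).
Proof.
move=> f_cap; split=> [i|u v Euv]; first by rewrite lexx (proj1 (proj2 paths_ok)).
by rewrite big1 // subr_ge0 f_cap.
Qed.

Lemma throughput_ub f :
  ubound [set \sum_i l i | l in residual_feasible f] (\sum_i lam i).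
Proof. by move=> _ [l [l_bnd _] <-]; apply: ler_sum => i _; case/andP: (l_bnd i). Qed.

Lemma T_val_ge f l : residual_feasible f l -> \sum_i l i <= T_val E C P lam f.
Proof.
move=> l_feas; rewrite T_valE.
by apply: ub_le_sup; [exists (\sum_i lam i); apply: throughput_ub | exists l].
Qed.

Lemma throughput_has_sup f :
  within_capacity f -> has_sup [set \sum_i l i | l in residual_feasible f].
Proof.
move=> f_cap; split; last by exists (\sum_i lam i); apply: throughput_ub.
by exists 0, (fun=> 0); rewrite ?big1 //; apply: residual_feasible0.
Qed.

Lemma T_val_le f : within_capacity f -> T_val E C P lam f <= \sum_i lam i.
Proof.
move=> f_cap; rewrite T_valE.
by apply: ge_sup; [exact: (throughput_has_sup f_cap).1 | exact: throughput_ub].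
Qed.

Lemma T_val_approx f e : within_capacity f -> 0 < e ->
  exists2 l, residual_feasible f l & T_val E C P lam f - e < \sum_i l i.
Proof.
move=> f_cap e_gt0; rewrite T_valE.
by have [_ [l l_feas <-] ?] := sup_adherent e_gt0 (throughput_has_sup f_cap); exists l.
Qed.

Section Mixtures.
Variables (I : eqType) (r : seq I) (theta : I -> R) (g : I -> V -> V -> R).
Hypotheses (theta_ge0 : forall i, i \in r -> 0 <= theta i)
           (theta_le1 : \sum_(i <- r) theta i <= 1).

Let mix u v := \sum_(i <- r) theta i * g i u v.

(* The slack weight [1 - sum theta] goes to the zero flow, for which [lam]
   itself is feasible. *)
Lemma residual_feasible_mix (l : I -> 'I_k -> R) :
  (forall i, i \in r -> residual_feasible (g i) (l i)) ->
  residual_feasible mix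
    (fun j => \sum_(i <- r) theta i * l i j + (1 - \sum_(i <- r) theta i) * lam j).
Proof.
move=> l_feas; have slack_ge0 : 0 <= 1 - \sum_(i <- r) theta i by rewrite subr_ge0.
have lam_ge0 := proj1 (proj2 paths_ok).
split=> [j|u v Euv].
  have l_bnd i : i \in r -> 0 <= l i j <= lam j by move=> /l_feas[/(_ j)].
  apply/andP; split.
    rewrite addr_ge0 ?mulr_ge0 // big_seq sumr_ge0 // => i ir.
    by rewrite mulr_ge0 ?theta_ge0 //; case/andP: (l_bnd i ir).
  apply: le_trans (_ : (\sum_(i <- r) theta i) * lam j
                         + (1 - \sum_(i <- r) theta i) * lam j <= _).
    rewrite lerD2r mulr_suml !big_seq ler_sum // => i ir.
    by rewrite ler_wpM2l ?theta_ge0 //; case/andP: (l_bnd i ir).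
  by rewrite -mulrDl subrKC mul1r.
rewrite big_split /= exchange_big -mulr_sumr /=.
have lam_load := proj2 (proj2 paths_ok) u v Euv.
apply: le_trans (_ : \sum_(i <- r) theta i * (C u v - g i u v)
                       + (1 - \sum_(i <- r) theta i) * C u v <= _).
  apply: lerD; last exact: ler_wpM2l.
  rewrite !big_seq; apply: ler_sum => i ir; rewrite -mulr_sumr ler_wpM2l ?theta_ge0 //.
  by case: (l_feas i ir) => _ /(_ u v Euv).
rewrite /mix; under eq_bigr do rewrite mulrBr.
by rewrite sumrB -mulr_suml mulrBl mul1r addrC addrA subrK.
Qed.

Lemma T_val_concave : (forall i, i \in r -> within_capacity (g i)) ->
  \sum_(i <- r) theta i * T_val E C P lam (g i) + (1 - \sum_(i <- r) theta i) * \sum_j lam j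
    <= T_val E C P lam mix.
Proof.
move=> g_cap; apply/ler_addgt0Pr => e e_gt0.
have /choice [l l_opt] : forall i, exists li : 'I_k -> R, i \in r ->
    residual_feasible (g i) li /\ T_val E C P lam (g i) - e < \sum_j li j.
  move=> i; have [ir|] := boolP (i \in r); last by exists (fun=> 0).
  by have [li ? ?] := T_val_approx (g_cap i ir) e_gt0; exists li.
have := T_val_ge (residual_feasible_mix (fun i ir => (l_opt i ir).1)).
rewrite big_split /= exchange_big -mulr_sumr; under eq_bigr do rewrite -mulr_sumr.
move=> mix_ge.
apply: le_trans (_ : \sum_(i <- r) theta i * (\sum_j l i j + e)
                       + (1 - \sum_(i <- r) theta i) * \sum_j lam j <= _).
  rewrite lerD2r !big_seq; apply: ler_sum => i ir; rewrite ler_wpM2l ?theta_ge0 //.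
  by rewrite -lerBlDr ltW // (l_opt i ir).2.
under eq_bigr do rewrite mulrDr; rewrite big_split /= -mulr_suml.
have : (\sum_(i <- r) theta i) * e <= e by rewrite ler_piMl // ltW.
by move: mix_ge; lra.
Qed.

Lemma Lambda_flow_convex : (forall i, i \in r -> within_capacity (g i)) ->
  Lambda_flow E C P lam mix <= \sum_(i <- r) theta i * Lambda_flow E C P lam (g i).
Proof.
move=> /T_val_concave concave; rewrite /Lambda_flow.
under [X in _ <= X]eq_bigr do rewrite mulrBr.
by rewrite sumrB -mulr_suml; lra.
Qed.

End Mixtures.

Lemma Lambda_flow_ge0 f : within_capacity f -> 0 <= Lambda_flow E C P lam f.
Proof. by move=> f_cap; rewrite subr_ge0 T_val_le. Qed.

End Throughput.

Section Strategies.
Variables (R : realType) (V : finType) (E : rel V) (C : V -> V -> R) (s t : V) (gamma : R).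
Variables (k : nat) (P : 'I_k -> V * seq V) (lam : 'I_k -> R).

Lemma pure_strategy f : in_Fle E C s t gamma f -> strategy E C s t gamma [:: (1, f)].
Proof.
by move=> f_Fle; split; [|split]; [move=> a [<-|[]] | rewrite big_seq1 | move=> a [<-|[]]].
Qed.

Lemma Lambda_pure_strategy f :
  Lambda_strategy E C P lam [:: (1, f)] = Lambda_flow E C P lam f.
Proof. by rewrite /Lambda_strategy big_seq1 mul1r. Qed.

Lemma Lambda_strategy_le w M : strategy E C s t gamma w ->
  (forall f, in_Fle E C s t gamma f -> Lambda_flow E C P lam f <= M) ->
  Lambda_strategy E C P lam w <= M.
Proof.
case=> w_ge0 [w_sum1 w_Fle] Lambda_le.
rewrite /Lambda_strategy -[leRHS]mul1r -w_sum1 mulr_suml.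
elim: w {w_sum1} w_ge0 w_Fle => [|a w IHw] w_ge0 w_Fle; first by rewrite !big_nil.
rewrite !big_cons; apply: lerD.
  by apply: ler_wpM2l; [apply: w_ge0 | apply/Lambda_le/w_Fle]; left.
by apply: IHw => b wb; [apply: w_ge0 | apply: w_Fle]; right.
Qed.

End Strategies.

Section SinglePathFlows.
Variables (R : realType) (V : finType) (E : rel V) (C : V -> V -> R) (s t : V) (gamma : R).
Variables (k : nat) (P : 'I_k -> V * seq V) (lam : 'I_k -> R).
Hypotheses (dag : simple_dag E) (paths_ok : user_paths_ok E C P lam).
Hypotheses (gamma_gt0 : 0 < gamma) (gamma_le_C : forall u v, E u v -> gamma <= C u v).

Lemma is_st_flow_uncapacitated f : is_st_flow E C s t f -> uncapacitated_flow E s t f.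
Proof. by case=> f_cap [f_off f_cons]; split=> // u v /f_cap /andP[]. Qed.

Lemma st_path_flow_capacity Q : path E s Q -> within_capacity E C (path_flow gamma (s, Q)).
Proof.
move=> EQ u v Euv; apply: le_trans (gamma_le_C Euv).
exact: path_flow_le (ltW gamma_gt0) (dag_path_uniq dag EQ).
Qed.

Lemma st_path_flow_single Q : path E s Q -> last s Q = t ->
  single_path_flow E C s t (path_flow gamma (s, Q)).
Proof.
move=> EQ lastQ; split; last by exists Q; split=> // u v /path_flow_gt0.
split=> [u v Euv|].
  by rewrite path_flow_ge0 ?(ltW gamma_gt0) //=; apply: st_path_flow_capacity.
split=> [u v|v vs vt]; first exact: path_flow_off.
by rewrite path_flow_conservation // lastQ.
Qed.

Lemma st_path_flow_Fle Q : path E s Q -> last s Q = t ->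
  in_Fle E C s t gamma (path_flow gamma (s, Q)).
Proof.
move=> EQ lastQ; split; first by case: (st_path_flow_single EQ lastQ).
have uniqQ := dag_path_uniq dag EQ.
rewrite /flow_val path_flow_value //.
by rewrite -[leRHS]mulr1n ler_wpMn2l ?ltW ?leq_b1.
Qed.

Variables (q0 : seq V) (M : R).
Hypotheses (Eq0 : path E s q0) (last_q0 : last s q0 = t).
Hypothesis M_max : forall Q, path E s Q -> last s Q = t ->
  Lambda_flow E C P lam (path_flow gamma (s, Q)) <= M.

Lemma Lambda_flow_le_max f : in_Fle E C s t gamma f -> Lambda_flow E C P lam f <= M.
Proof.
case=> /is_st_flow_uncapacitated flow_f val_le.
have [ps wps_all f_ps] := flow_decomposition dag Eq0 last_q0 flow_f.
have /allP wps := wps_all.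
have M_ge0 : 0 <= M.
  by apply: le_trans (M_max Eq0 last_q0); apply: Lambda_flow_ge0 (st_path_flow_capacity Eq0).
have theta_ge0 p : p \in ps -> 0 <= p.1 / gamma.
  by move=> /wps /and4P[p_gt0 _ _ _]; rewrite divr_ge0 ?ltW.
have theta_le1 : \sum_(p <- ps) p.1 / gamma <= 1.
  by rewrite -mulr_suml -(paths_flow_val dag wps_all) -f_ps ler_pdivrMr // mul1r.
have -> : f = fun u v => \sum_(p <- ps) p.1 / gamma * path_flow gamma (s, p.2) u v.
  rewrite f_ps; apply/funext => u; apply/funext => v; apply: eq_bigr => p _.
  by rewrite /path_flow mulrnAr divfK ?gt_eqF.
apply: le_trans (Lambda_flow_convex paths_ok theta_ge0 theta_le1 _) _.
  by move=> p /wps /and4P[_ Ep _ _]; apply: st_path_flow_capacity.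
apply: le_trans (_ : \sum_(p <- ps) p.1 / gamma * M <= _).
  rewrite !big_seq; apply: ler_sum => p pps; rewrite ler_wpM2l ?theta_ge0 //.
  by case/and4P: (wps p pps) => _ Ep /eqP lastp _; apply: M_max.
by rewrite -mulr_suml ler_piMl.
Qed.

End SinglePathFlows.

Theorem proposition2 (R : realType) (V : finType) (E : rel V)
  (C : V -> V -> R) (s t : V) (gamma : R)
  (k : nat) (P : 'I_k -> V * seq V) (lam : 'I_k -> R) :
  simple_dag E ->
  (forall u v, E u v -> 0 <= C u v) ->
  (exists q : seq V, path E s q /\ last s q = t) ->
  0 < gamma ->
  (forall u v, E u v -> gamma <= C u v) ->
  user_paths_ok E C P lam ->
  exists fstar : V -> V -> R,
    single_path_flow E C s t fstar /\ in_Fle E C s t gamma fstar /\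
    optimal_strategy E C s t P lam gamma [:: (1, fstar)].
Proof.
move=> dag _ [q0 [Eq0 last_q0]] gamma_gt0 gamma_le_C paths_ok.
pose st_path Q := path E s Q && (last s Q == t).
have st_q0 : st_path q0 by rewrite /st_path Eq0 last_q0 eqxx.
have st_bounded Q : st_path Q -> (size Q < #|V|)%N by case/andP=> /(dag_path_size dag).
have [Q /andP[EQ /eqP lastQ] Q_max] := bounded_seq_argmax
  (fun Q => Lambda_flow E C P lam (path_flow gamma (s, Q))) st_bounded st_q0.
have Q_Fle := st_path_flow_Fle dag gamma_gt0 gamma_le_C EQ lastQ.
exists (path_flow gamma (s, Q)); split; first exact: st_path_flow_single.
split=> //; split=> [|w w_strat]; first exact: pure_strategy.
rewrite Lambda_pure_strategy; apply: Lambda_strategy_le w_strat _.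
apply: (Lambda_flow_le_max dag paths_ok gamma_gt0 gamma_le_C Eq0 last_q0) => Q' EQ' lastQ'.
by apply: Q_max; rewrite /st_path EQ' lastQ' eqxx.
Qed.
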